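(* Let $N\ge1$, $m=2$, $d=1$, and for every $t=1,\dots,N$ let $m_t=3$, $(q^{(t)}_1,q^{(t)}_2,q^{(t)}_3)=(0,1/2,3/2)$ and $\boldsymbol a^{(t)}=(1/3,1/3,1/3)$. Consider the point $X=(0,1)$, $\boldsymbol w=(1/3,2/3)$, and for all $t$, $\Pi^{(t)}$ with first row $(1/3,0,0)$ and second row $(0,1/3,1/3)$. Then: (i) with $X$ fixed, $(\boldsymbol w,\Pi^{(1)},\dots,\Pi^{(N)})$ is an optimal solution of the resulting linear program; (ii) with $(\boldsymbol w,\Pi^{(1)},\dots,\Pi^{(N)})$ fixed, $X$ minimizes the objective over $X\in\mathbb{R}^2$; (iii) nevertheless, this point is not a local minimum of the free support problem, and for every $\delta\in(0,1/2)$ there is a feasible point with $X=(\delta,1)$ and strictly smaller objective value.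
   Context: Free support problem: given discrete measures with support points $q^{(t)}_j\in\mathbb{R}^d$ and weights $\boldsymbol a^{(t)}\in\mathbb{R}^{m_t}$ (nonnegative, summing to 1), $t=1,\dots,N$, minimize $\sum_{t=1}^N\sum_{i=1}^m\sum_{j=1}^{m_t}\pi^{(t)}_{ij}\|\boldsymbol x_i-\boldsymbol q^{(t)}_j\|^2$ over $X=(\boldsymbol x_1,\dots,\boldsymbol x_m)\in(\mathbb{R}^d)^m$, $\boldsymbol w\in\mathbb{R}^m$ and $\Pi^{(t)}=[\pi^{(t)}_{ij}]\in\mathbb{R}^{m\times m_t}$, subject to $\boldsymbol w\ge0$, $\boldsymbol 1_m^{\top}\boldsymbol w=1$, $\Pi^{(t)}\ge0$, $\Pi^{(t)}\boldsymbol 1_{m_t}=\boldsymbol w$, $(\Pi^{(t)})^{\top}\boldsymbol 1_m=\boldsymbol a^{(t)}$ for all $t$. For fixed $X$ this is a linear program in $(\boldsymbol w,\Pi^{(1)},\dots,\Pi^{(N)})$. A local minimum means a feasible point whose objective value is no larger than that of every feasible point in some neighborhood of it (in the joint variables). *)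

From Stdlib Require Import Reals Lra Lia.
Open Scope R_scope.

Fixpoint sumR (n : nat) (f : nat -> R) : R :=
  match n with
  | O => 0
  | S k => sumR k f + f k
  end.

(* Data of the example: m = 2, d = 1, m_t = 3 for all t (indices from 0). *)
Definition m_sz : nat := 2.
Definition mt_sz : nat := 3.

Definition q (t j : nat) : R :=
  match j with
  | O => 0
  | S O => 1/2
  | _ => 3/2
  end.

Definition a (t j : nat) : R := 1/3.

(* Variables: X : nat -> R (x_i, i < 2), w : nat -> R (i < 2),
   P : nat -> nat -> nat -> R, P t i j = pi^(t)_{ij} (t < N, i < 2, j < 3). *)

Definition objective (N : nat) (X : nat -> R) (P : nat -> nat -> nat -> R) : R :=
  sumR N (fun t => sumR m_sz (fun i => sumR mt_sz (fun j =>
    P t i j * (X i - q t j) ^ 2))).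

Definition feasible (N : nat) (w : nat -> R) (P : nat -> nat -> nat -> R) : Prop :=
  (forall i, (i < m_sz)%nat -> 0 <= w i) /\
  sumR m_sz w = 1 /\
  (forall t i j, (t < N)%nat -> (i < m_sz)%nat -> (j < mt_sz)%nat -> 0 <= P t i j) /\
  (forall t i, (t < N)%nat -> (i < m_sz)%nat -> sumR mt_sz (fun j => P t i j) = w i) /\
  (forall t j, (t < N)%nat -> (j < mt_sz)%nat -> sumR m_sz (fun i => P t i j) = a t j).

(* (X', w', P') lies in the open max-norm ball of radius eps around (X, w, P),
   only the relevant coordinates being considered. *)
Definition near (N : nat) (eps : R) (X w : nat -> R) (P : nat -> nat -> nat -> R)
    (X' w' : nat -> R) (P' : nat -> nat -> nat -> R) : Prop :=
  (forall i, (i < m_sz)%nat -> Rabs (X' i - X i) < eps) /\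
  (forall i, (i < m_sz)%nat -> Rabs (w' i - w i) < eps) /\
  (forall t i j, (t < N)%nat -> (i < m_sz)%nat -> (j < mt_sz)%nat ->
     Rabs (P' t i j - P t i j) < eps).

Definition local_min (N : nat) (X w : nat -> R) (P : nat -> nat -> nat -> R) : Prop :=
  feasible N w P /\
  exists eps, 0 < eps /\
    forall X' w' P', feasible N w' P' -> near N eps X w P X' w' P' ->
      objective N X P <= objective N X' P'.

Definition X0 (i : nat) : R := match i with O => 0 | _ => 1 end.
Definition w0 (i : nat) : R := match i with O => 1/3 | _ => 2/3 end.
Definition P0 (t i j : nat) : R :=
  match i, j with
  | O, O => 1/3
  | O, _ => 0
  | _, O => 0
  | _, _ => 1/3
  end.
Definition Xdelta (delta : R) (i : nat) : R := match i with O => delta | _ => 1 end.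

(* Since the data do not depend on t, the objective is a sum over t of one
   "block cost" per transport plan.  We prove:
   (i)  with X0 = (0,1) every plan with the prescribed column sums costs at
        least 1/6 per block, since each column j pays at least 1/3 times the
        squared distance from q_j to its nearest support point; P0 attains 1/6;
   (ii) with P0 fixed, the block cost is an explicit convex quadratic in X
        minimized at X0;
   (iii) the "transfer" plans P_transfer s, which move mass s of the middle
        column from x_2 to x_1, are feasible for 0 <= s <= 1/3 and have an
        explicit cost at X = (delta, 1).  Choosing s = delta (arbitrarily close
        to the point) refutes local minimality, and s = 1/3 gives the improving
        points for every delta in (0, 1/2). *)
From Stdlib Require Import Reals Lra Lia.
Open Scope R_scope.

Lemma sumR_le (n : nat) (f g : nat -> R) :
  (forall k, (k < n)%nat -> f k <= g k) -> sumR n f <= sumR n g.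
Proof.
  induction n as [|n IH]; intros Hfg; simpl; [lra|].
  assert (sumR n f <= sumR n g) by (apply IH; intros; apply Hfg; lia).
  assert (f n <= g n) by (apply Hfg; lia).
  lra.
Qed.

Lemma sumR_ext (n : nat) (f g : nat -> R) :
  (forall k, (k < n)%nat -> f k = g k) -> sumR n f = sumR n g.
Proof.
  intros Hfg. apply Rle_antisym; apply sumR_le; intros k Hk; rewrite Hfg by exact Hk; lra.
Qed.

Lemma sumR_const (n : nat) (c : R) : sumR n (fun _ => c) = INR n * c.
Proof.
  induction n as [|n IH]; simpl sumR; [simpl; ring|].
  rewrite IH, S_INR; ring.
Qed.

(* Transport cost of one plan p; the support points q t are the same for
   every t, so the objective is the sum of the block costs of the P t. *)
Definition block_cost (X : nat -> R) (p : nat -> nat -> R) : R :=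
  sumR m_sz (fun i => sumR mt_sz (fun j => p i j * (X i - q O j) ^ 2)).

Lemma objective_blocks (N : nat) (X : nat -> R) (P : nat -> nat -> nat -> R) :
  objective N X P = sumR N (fun t => block_cost X (P t)).
Proof. reflexivity. Qed.

Lemma objective_const_plan (N : nat) (X : nat -> R) (P : nat -> nat -> nat -> R) :
  (forall t, P t = P O) -> objective N X P = INR N * block_cost X (P O).
Proof.
  intros HP. rewrite objective_blocks, <- sumR_const.
  apply sumR_ext; intros t _; now rewrite HP.
Qed.

Lemma column_cost_lb (p0 p1 c u v : R) :
  0 <= p0 -> 0 <= p1 -> p0 + p1 = c -> p0 * u + p1 * v >= c * Rmin u v.
Proof.
  intros H0 H1 Hc. subst c.
  pose proof (Rmin_l u v). pose proof (Rmin_r u v). nra.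
Qed.

(* (i) At X0, any plan with nonnegative entries and column sums a = 1/3 costs
   at least 1/6: columns 1 and 2 each lie at distance 1/2 from X0. *)
Lemma block_cost_X0_lb (p : nat -> nat -> R) :
  (forall i j, (i < m_sz)%nat -> (j < mt_sz)%nat -> 0 <= p i j) ->
  (forall j, (j < mt_sz)%nat -> sumR m_sz (fun i => p i j) = 1/3) ->
  1/6 <= block_cost X0 p.
Proof.
  intros Hnn Hcol. unfold m_sz, mt_sz in *.
  assert (Hcol_lb : forall j u v, (j < 3)%nat ->
            p 0%nat j * u + p 1%nat j * v >= 1/3 * Rmin u v).
  { intros j u v Hj. apply column_cost_lb; try (apply Hnn; lia).
    rewrite <- (Hcol j Hj); simpl; ring. }
  pose proof (Hcol_lb 0%nat 0 1 ltac:(lia)).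
  pose proof (Hcol_lb 1%nat (1/4) (1/4) ltac:(lia)).
  pose proof (Hcol_lb 2%nat (9/4) (1/4) ltac:(lia)).
  pose proof (Hnn 0%nat 0%nat ltac:(lia) ltac:(lia)).
  rewrite Rmin_left in * by lra. rewrite Rmin_right in * by lra.
  unfold block_cost, X0, q; simpl. lra.
Qed.

Lemma block_cost_P0 (X : nat -> R) :
  block_cost X (P0 O) = X O ^ 2 / 3 + (X 1%nat - 1) ^ 2 * (2/3) + 1/6.
Proof. unfold block_cost, P0, q; simpl; field. Qed.

Lemma block_cost_P0_min (X : nat -> R) : block_cost X0 (P0 O) <= block_cost X (P0 O).
Proof.
  rewrite !block_cost_P0. unfold X0.
  pose proof (pow2_ge_0 (X O)). pose proof (pow2_ge_0 (X 1%nat - 1)). lra.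
Qed.

Lemma feasible_P0 (N : nat) : feasible N w0 P0.
Proof.
  unfold feasible, m_sz, mt_sz, w0, P0, a; repeat split; simpl.
  - intros [|[|]] _; lra.
  - lra.
  - intros t [|[|]] [|[|[|]]] _ _ _; lra.
  - intros t [|[|]] _ Hi; lra || lia.
  - intros t [|[|[|]]] _ Hj; lra || lia.
Qed.

(* The transfer plan: mass s of the middle column q = 1/2 is moved from the
   second support point to the first; s = 0 is the plan P0. *)
Definition w_transfer (s : R) (i : nat) : R :=
  match i with O => 1/3 + s | _ => 2/3 - s end.
Definition P_transfer (s : R) (t i j : nat) : R :=
  match i, j with
  | O, O => 1/3 | O, S O => s | O, _ => 0
  | _, O => 0 | _, S O => 1/3 - s | _, _ => 1/3
  end.

Lemma feasible_transfer (N : nat) (s : R) :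
  0 <= s <= 1/3 -> feasible N (w_transfer s) (P_transfer s).
Proof.
  intros Hs. unfold feasible, m_sz, mt_sz, w_transfer, P_transfer, a;
    repeat split; simpl.
  - intros [|[|]] _; lra.
  - lra.
  - intros t [|[|]] [|[|[|]]] _ _ _; lra.
  - intros t [|[|]] _ Hi; lra || lia.
  - intros t [|[|[|]]] _ Hj; lra || lia.
Qed.

Lemma near_transfer (N : nat) (eps s : R) :
  0 <= s < eps -> near N eps X0 w0 P0 (Xdelta s) (w_transfer s) (P_transfer s).
Proof.
  intros Hs. unfold near, m_sz, mt_sz, Xdelta, X0, w_transfer, w0, P_transfer, P0;
    repeat split.
  - intros [|[|]] _; apply Rabs_def1; lra.
  - intros [|[|]] _; apply Rabs_def1; lra.
  - intros t [|[|]] [|[|[|]]] _ _ _; apply Rabs_def1; lra.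
Qed.

Lemma block_cost_transfer (delta s : R) :
  block_cost (Xdelta delta) (P_transfer s O) =
  1/6 + delta ^ 2 / 3 + s * (delta ^ 2 - delta).
Proof. unfold block_cost, Xdelta, P_transfer, q; simpl; field. Qed.

Lemma transfer_improves (N : nat) (delta s : R) :
  (1 <= N)%nat -> 0 < delta -> delta * (1/3 + s) < s ->
  objective N (Xdelta delta) (P_transfer s) < objective N X0 P0.
Proof.
  intros HN Hd Hds.
  rewrite !objective_const_plan by reflexivity.
  rewrite block_cost_transfer, block_cost_P0.
  assert (HNpos : 0 < INR N) by (apply lt_0_INR; lia).
  apply Rmult_lt_compat_l; [exact HNpos|]. unfold X0. nra.
Qed.

Lemma not_local_min_X0 (N : nat) : (1 <= N)%nat -> ~ local_min N X0 w0 P0.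
Proof.
  intros HN [_ [eps [Heps Hmin]]].
  set (s := Rmin (eps / 2) (1/3)).
  assert (Hs_pos : 0 < s) by (apply Rmin_glb_lt; lra).
  assert (Hs_third : s <= 1/3) by apply Rmin_r.
  assert (Hs_eps : s <= eps / 2) by apply Rmin_l.
  assert (Hle := Hmin (Xdelta s) (w_transfer s) (P_transfer s)
           (feasible_transfer N s ltac:(lra)) (near_transfer N eps s ltac:(lra))).
  assert (Hlt := transfer_improves N s s HN Hs_pos ltac:(nra)).
  lra.
Qed.

Theorem mainTheorem8 (N : nat) (HN : (1 <= N)%nat) :
  (* (i) (w0, P0) is optimal for the LP with X = X0 fixed *)
  (feasible N w0 P0 /\
   forall w P, feasible N w P -> objective N X0 P0 <= objective N X0 P) /\
  (* (ii) X0 minimizes the objective with (w0, P0) fixed *)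
  (forall X, objective N X0 P0 <= objective N X P0) /\
  (* (iii) not a local minimum, with explicit improving points *)
  (~ local_min N X0 w0 P0 /\
   forall delta, 0 < delta < 1/2 ->
     exists w P, feasible N w P /\ objective N (Xdelta delta) P < objective N X0 P0).
Proof.
  split; [split|split; [|split]].
  - apply feasible_P0.
  - intros w P [_ [_ [Hnn [_ Hcol]]]].
    rewrite (objective_const_plan N X0 P0) by reflexivity.
    rewrite objective_blocks, <- sumR_const.
    apply sumR_le; intros t Ht.
    replace (block_cost X0 (P0 O)) with (1/6) by (rewrite block_cost_P0; unfold X0; field).
    apply block_cost_X0_lb; intros; [apply Hnn | apply Hcol]; assumption.
  - intros X. rewrite !objective_const_plan by reflexivity.
    apply Rmult_le_compat_l; [apply pos_INR | apply block_cost_P0_min].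
  - now apply not_local_min_X0.
  - intros delta Hd. exists (w_transfer (1/3)), (P_transfer (1/3)).
    split; [apply feasible_transfer; lra|].
    apply transfer_improves; [assumption | lra | nra].
Qed.
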